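(* Let $K$ be a field, $S=K[x_1,\ldots,x_n]$, and let $I\subset S$ be any monomial ideal minimally generated by $q$ monomials. Then $\operatorname{pd}_S(I^2)\le\dim(\mathbb{M}_q^2)=\binom{q}{2}$.
   Context: $\operatorname{pd}_S$ denotes projective dimension over $S$ (length of the minimal free resolution). $\mathbb{M}_q^2$ is the simplicial complex on vertex set $\{\ell_{i,j}:1\le i\le j\le q\}$ with facets $\mathcal{M}_i=\{\ell_{a,b}:1\le a<b\le q\}\cup\{\ell_{i,i}\}$ for $i\in[q]$; its dimension is the maximal size of a face minus one. *)

From HB Require Import structures.
From mathcomp Require Import all_boot all_order all_algebra.
From mathcomp Require Import mpoly.
Set Implicit Arguments. Unset Strict Implicit. Unset Printing Implicit Defensive.
Import GRing.Theory.
Local Open Scope ring_scope.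

Definition ideal_gen (K : fieldType) (n : nat) (q : nat)
  (g : 'I_q -> {mpoly K[n]}) (f : {mpoly K[n]}) : Prop :=
  exists c : 'I_q -> {mpoly K[n]}, f = \sum_(i < q) c i * g i.

Definition ideal_sq (K : fieldType) (n : nat) (J : {mpoly K[n]} -> Prop)
  (f : {mpoly K[n]}) : Prop :=
  exists (k : nat) (a b : 'I_k -> {mpoly K[n]}),
    (forall i, J (a i) /\ J (b i)) /\ f = \sum_(i < k) a i * b i.

Definition mdivides (n : nat) (m1 m2 : 'X_{1..n}) : bool :=
  [forall i : 'I_n, m1 i <= m2 i]%N.

(* The monomials x^(m i), i < q, are a minimal generating set of the
   ideal they generate (for monomial ideals: none divides another). *)
Definition minimal_monomial_gens (n q : nat) (m : 'I_q -> 'X_{1..n}) : Prop :=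
  forall i j : 'I_q, i != j -> ~~ mdivides (m i) (m j).

(* A finite free resolution of length L of an ideal J, with row-vector
   convention: free modules S^(b i), maps v |-> v *m D i : S^(b i.+1) -> S^(b i),
   augmentation v |-> v *m e : S^(b 0) -> S, ranks b i = 0 for i > L:
     0 -> S^(b L) -> ... -> S^(b 0) -> J -> 0  exact. *)
Definition free_resolution (K : fieldType) (n : nat)
  (J : {mpoly K[n]} -> Prop) (L : nat) : Prop :=
  exists (b : nat -> nat) (e : 'cV[{mpoly K[n]}]_(b 0%N))
         (D : forall i : nat, 'M[{mpoly K[n]}]_(b i.+1, b i)),
    (forall i, (L < i)%N -> b i = 0%N) /\
    (forall f, J f <-> exists v : 'rV_(b 0%N), f = (v *m e) 0 0) /\
    (forall v : 'rV_(b 0%N), v *m e = 0 <-> exists w : 'rV_(b 1%N), v = w *m D 0%N) /\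
    (forall (i : nat) (v : 'rV_(b i.+1)),
        v *m D i = 0 <-> exists w : 'rV_(b i.+2), v = w *m D i.+1).

Definition pd_le (K : fieldType) (n : nat) (J : {mpoly K[n]} -> Prop) (k : nat) : Prop :=
  exists L, (L <= k)%N /\ free_resolution J L.

(* The simplicial complex M_q^2 on vertices l_{i,j} = (i,j), i <= j < q. *)
Definition Mq2_facet (q : nat) (i : 'I_q) : {set 'I_q * 'I_q} :=
  [set ab : 'I_q * 'I_q | ((nat_of_ord ab.1) < (nat_of_ord ab.2))%N || (ab == (i, i))].

Definition Mq2_face (q : nat) (F : {set 'I_q * 'I_q}) : bool :=
  [exists i : 'I_q, F \subset Mq2_facet i].

Definition Mq2_dim (q : nat) : nat :=
  (\max_(F : {set 'I_q * 'I_q} | Mq2_face F) #|F|).-1.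

From HB Require Import structures.
From mathcomp Require Import all_boot all_order all_algebra.
From mathcomp Require Import mpoly ring zify.
Set Implicit Arguments. Unset Strict Implicit. Unset Printing Implicit Defensive.
Import GRing.Theory.
Local Open Scope ring_scope.

(* I^2 is generated by the monomials x^(m_i + m_j), i <= j, which we attach as
   labels to the vertices (i, j) of M_q^2, labelling each face by the lcm of its
   vertex labels.  The labelled simplicial chain complex of M_q^2 is a free
   complex of length dim M_q^2 whose augmentation has image I^2.  Taking the
   coefficient of a monomial x^a turns its boundary into the simplicial boundary
   of the subcomplex of faces whose label divides x^a, so the complex is exact as
   soon as all these subcomplexes are acyclic.  They are cones: if
   m_i + m_j <= a for some i < j, the vertex (i, j) lies in every facet; otherwise
   no two diagonal vertices (i, i), (j, j) have labels dividing x^a (else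
   m_i + m_j would divide it too), so the subcomplex is a single vertex or empty.
   A cone vertex yields a contracting homotopy. *)

Section SimplicialChains.
Variables (K : fieldType) (V : finType).
Implicit Types (v w x : V) (F G : {set V}) (c : {set V} -> K).

Definition rank_lt v w := (enum_rank v < enum_rank w)%N.

Definition ins_sign v F : K := (-1) ^+ #|[set w in F | rank_lt w v]|.

Lemma rank_ltxx v : rank_lt v v = false.
Proof. exact: ltnn. Qed.

Lemma rank_lt_asym v w : v != w -> rank_lt v w = ~~ rank_lt w v.
Proof.
move=> neq_vw; rewrite /rank_lt; case: ltngtP => // /val_inj/enum_rank_inj eq_vw.
by rewrite eq_vw eqxx in neq_vw.
Qed.

Lemma ins_sign0 v : ins_sign v set0 = 1.
Proof.
rewrite /ins_sign (_ : [set w in set0 | _] = set0) ?cards0 //.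
by apply/setP => w; rewrite !inE.
Qed.

Lemma ins_signU1 v x F :
  x \notin F -> ins_sign v (x |: F) = (-1) ^+ rank_lt x v * ins_sign v F.
Proof.
move=> xF; rewrite /ins_sign -exprD; congr (_ ^+ _).
case: (boolP (rank_lt x v)) => [xv|Nxv].
  have -> : [set w in x |: F | rank_lt w v] = x |: [set w in F | rank_lt w v].
    by apply/setP => w; rewrite !inE; case: (eqVneq w x) => [->|]; rewrite ?xv.
  by rewrite cardsU1 !inE (negbTE xF).
rewrite add0n; apply: eq_card => w; rewrite !inE.
by case: (eqVneq w x) => [->|] //=; rewrite (negbTE Nxv) andbF.
Qed.

Lemma ins_signU1id v F : ins_sign v (v |: F) = ins_sign v F.
Proof.
congr (_ ^+ _); apply: eq_card => w; rewrite !inE.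
by case: (eqVneq w v) => [->|] //=; rewrite rank_ltxx andbF.
Qed.

Lemma ins_signD1id v F : ins_sign v (F :\ v) = ins_sign v F.
Proof.
congr (_ ^+ _); apply: eq_card => w; rewrite !inE.
by case: (eqVneq w v) => [->|] //=; rewrite rank_ltxx andbF.
Qed.

Lemma ins_signMK v F : involutive ( *%R (ins_sign v F)).
Proof. exact: signrMK. Qed.

Lemma ins_sign_swap v w F : v \notin F -> w \notin F -> v != w ->
  ins_sign v F * ins_sign w (v |: F) = - (ins_sign w F * ins_sign v (w |: F)).
Proof.
move=> vF wF neq_vw; rewrite !ins_signU1 // (rank_lt_asym neq_vw).
by case: (rank_lt w v); rewrite /= ?expr1 ?expr0; ring.
Qed.

Lemma sum_antisym_pairs (R : zmodType) (P : pred (V * V)) (T : V * V -> R) :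
  (forall v w, P (v, w) -> v != w) -> (forall v w, P (w, v) = P (v, w)) ->
  (forall v w, P (v, w) -> T (w, v) = - T (v, w)) -> \sum_(p | P p) T p = 0.
Proof.
move=> Poffdiag Psym Tanti.
rewrite (bigID (fun p => rank_lt p.1 p.2)) /=; apply/eqP; rewrite addr_eq0 -sumrN; apply/eqP.
rewrite (reindex_inj (h := fun p : V * V => (p.2, p.1))) /=; last first.
  by case=> a b [c d] /= [-> ->].
apply: eq_big => [[v w]|[v w] /andP [Pwv _]] /=; last by rewrite (Tanti w v Pwv) opprK.
rewrite Psym; case Pvw: (P (v, w)) => //=.
by rewrite (rank_lt_asym (Poffdiag _ _ Pvw)) negbK.
Qed.

(* A chain is the function giving the coefficient of each face, so
   [chain_bd c G] is the coefficient of [G] in the boundary of [c]. *)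
Definition chain_bd c G : K := \sum_(v | v \notin G) ins_sign v G * c (v |: G).

Definition cone_htpy x c G : K := if x \in G then ins_sign x G * c (G :\ x) else 0.

Lemma eq_chain_bd c c' : c =1 c' -> chain_bd c =1 chain_bd c'.
Proof. by move=> eq_c G; apply: eq_bigr => v _; rewrite eq_c. Qed.

Lemma chain_bd0 : chain_bd (fun=> 0) =1 (fun=> 0).
Proof. by move=> G; rewrite /chain_bd big1 // => v _; rewrite mulr0. Qed.

Lemma chain_bdK c G : chain_bd (chain_bd c) G = 0.
Proof.
pose T (p : V * V) := ins_sign p.1 G * ins_sign p.2 (p.1 |: G) * c (p.2 |: (p.1 |: G)).
rewrite -(@sum_antisym_pairs _ [pred p | [&& p.1 \notin G, p.2 \notin G & p.1 != p.2]] T).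
- rewrite /chain_bd; under eq_bigr => v _ do rewrite mulr_sumr.
  rewrite pair_big_dep /=; apply: eq_big => [[v w]|[v w] _] /=; last by rewrite mulrA.
  rewrite !inE negb_or [w == v]eq_sym.
  by case: (v \in G); case: (w \in G); rewrite /= ?andbF ?andbT.
- by move=> v w /and3P [].
- by move=> v w /=; rewrite andbCA [w == v]eq_sym.
move=> v w /and3P [/= vG wG neq_vw].
by rewrite /T /= setUCA (ins_sign_swap vG wG neq_vw) mulNr opprK.
Qed.

Lemma cone_htpyU1 x v c G : x \in G -> v \notin G ->
  ins_sign v G * cone_htpy x c (v |: G) =
  - (ins_sign x G * (ins_sign v (G :\ x) * c (v |: (G :\ x)))).
Proof.
move=> xG vG; have neq_vx : v != x by apply: contraNneq vG => ->.
rewrite /cone_htpy (setU1r _ xG).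
have -> : (v |: G) :\ x = v |: (G :\ x).
  apply/setP => w; rewrite !inE.
  by case: (eqVneq w x) => // ->; rewrite eq_sym (negbTE neq_vx).
rewrite ins_signU1 // -[in ins_sign v G](setD1K xG) ins_signU1 ?setD11 //.
rewrite (rank_lt_asym neq_vx); case: (rank_lt x v); rewrite /= ?expr1 ?expr0; ring.
Qed.

Lemma chain_bd_cone_htpy x c G :
  chain_bd (cone_htpy x c) G + cone_htpy x (chain_bd c) G = c G.
Proof.
rewrite {2}/cone_htpy /chain_bd; case: ifPn => [xG|xNG].
- rewrite [X in _ * X](bigD1 x) /=; last by rewrite !inE eqxx.
  rewrite setD1K // ins_signD1id mulrDr ins_signMK addrCA -[RHS]addr0; congr (_ + _).
  rewrite (eq_bigr _ (fun v vG => cone_htpyU1 c xG vG)) sumrN mulr_sumr addrC.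
  apply/eqP; rewrite subr_eq0; apply/eqP/eq_bigl => v; rewrite !inE negb_and negbK.
  by case: (eqVneq v x) => [->|] /=; rewrite ?eqxx ?andbF ?xG ?andbT.
rewrite addr0 (bigD1 x) //= {1}/cone_htpy setU11 setU1K // ins_signU1id ins_signMK.
rewrite big1 ?addr0 // => v /andP [vG neq_vx].
by rewrite /cone_htpy !inE (negbTE xNG) orbF eq_sym (negbTE neq_vx) mulr0.
Qed.

End SimplicialChains.

Section Monomials.
Variable n : nat.
Implicit Types (a b d x y : 'X_{1..n}).

Lemma lem_sub2rE x y a : (x <= y)%MM -> (x <= a)%MM -> (y - x <= a - x)%MM = (y <= a)%MM.
Proof.
move=> /mnm_lepP le_xy /mnm_lepP le_xa.
apply/mnm_lepP/mnm_lepP => le i; have := le i; have := le_xy i; have := le_xa i;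
  rewrite ?mnmBE; lia.
Qed.

Lemma subm_sub2r x y a : (x <= y)%MM -> (y <= a)%MM -> (a - x - (y - x) = a - y)%MM.
Proof.
move=> /mnm_lepP le_xy /mnm_lepP le_ya; apply/mnmP => i; rewrite !mnmBE.
by have := le_xy i; have := le_ya i; lia.
Qed.

Lemma mcoeffMX_le (K : ringType) (p : {mpoly K[n]}) d b :
  (p * 'X_[d])@_b = if (d <= b)%MM then p@_(b - d) else 0.
Proof.
case: ifPn => le_db; first by rewrite -{1}(submK le_db) addmC mcoeffMX.
apply/eqP; rewrite mcoeff_eq0 (perm_mem (msuppMX p d)).
by apply: contra le_db => /mapP [b' _ ->]; rewrite lem_addr.
Qed.

End Monomials.

Section LcmLabels.
Variables (n : nat) (V : finType) (u : V -> 'X_{1..n}).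
Implicit Types (v : V) (F G : {set V}) (a : 'X_{1..n}).

Definition lcm_lab F : 'X_{1..n} := [multinom (\max_(v in F) u v i)%N | i < n].

Lemma lcm_lab_leP F a : reflect (forall v, v \in F -> (u v <= a)%MM) (lcm_lab F <= a)%MM.
Proof.
apply: (iffP mnm_lepP) => [le_Fa v vF|le_Fa i].
  by apply/mnm_lepP => i; have := le_Fa i; rewrite mnmE => /bigmax_leqP; apply.
by rewrite mnmE; apply/bigmax_leqP => v vF; apply/mnm_lepP/le_Fa.
Qed.

Lemma lcm_lab_ge v F : v \in F -> (u v <= lcm_lab F)%MM.
Proof. by move=> vF; apply/mnm_lepP => i; rewrite mnmE (leq_bigmax_cond _ vF). Qed.

Lemma lcm_lab_subset F G : F \subset G -> (lcm_lab F <= lcm_lab G)%MM.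
Proof. by move=> /subsetP sFG; apply/lcm_lab_leP => v /sFG; apply: lcm_lab_ge. Qed.

Lemma lcm_labU1_le v F a :
  (lcm_lab (v |: F) <= a)%MM = (u v <= a)%MM && (lcm_lab F <= a)%MM.
Proof.
apply/lcm_lab_leP/andP => [le_Fa|[le_va /lcm_lab_leP le_Fa] w].
  split; first by apply: le_Fa; rewrite setU11.
  by apply/lcm_lab_leP => w wF; apply: le_Fa; rewrite setU1r.
by rewrite !inE => /orP [/eqP ->|/le_Fa].
Qed.

Lemma lcm_lab0 : lcm_lab set0 = 0%MM.
Proof. by apply/mnmP => i; rewrite mnmE mnm0E big_set0. Qed.

Lemma lcm_lab1 v : lcm_lab [set v] = u v.
Proof. by apply/mnmP => i; rewrite mnmE big_set1. Qed.

End LcmLabels.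

Section LabelledChains.
Variables (K : fieldType) (n : nat) (V : finType) (u : V -> 'X_{1..n}).
Local Notation S := {mpoly K[n]}.
Local Notation lcm_lab := (lcm_lab u).
Implicit Types (v : V) (F G : {set V}) (a : 'X_{1..n}) (c : {set V} -> S).

Definition lbd c G : S :=
  \sum_(v | v \notin G) ins_sign K v G *: (c (v |: G) * 'X_[lcm_lab (v |: G) - lcm_lab G]).

(* [c F] is the coefficient of a basis element of degree x^(lcm_lab F), so the
   x^a-part of [c] at [F] is the coefficient of x^(a - lcm_lab F) in [c F]. *)
Definition strand a c F : K :=
  if (lcm_lab F <= a)%MM then (c F)@_(a - lcm_lab F) else 0.

Lemma eq_lbd c c' : c =1 c' -> lbd c =1 lbd c'.
Proof. by move=> eq_c G; apply: eq_bigr => v _; rewrite eq_c. Qed.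

Lemma lbd_set0 c : lbd c set0 = \sum_v c [set v] * 'X_[u v].
Proof.
rewrite /lbd; apply: eq_big => [v|v _]; first by rewrite in_set0.
by rewrite ins_sign0 scale1r setU0 lcm_lab1 lcm_lab0 subm0.
Qed.

Lemma eq_strand a c c' : c =1 c' -> strand a c =1 strand a c'.
Proof. by move=> eq_c F; rewrite /strand eq_c. Qed.

Lemma strand_lbd a c : strand a (lbd c) =1 chain_bd (strand a c).
Proof.
move=> G; rewrite /strand /chain_bd; case: ifPn => le_Ga.
  rewrite raddf_sum; apply: eq_bigr => v _.
  have le_GvG := lcm_lab_subset u (subsetUr [set v] G).
  rewrite /= mcoeffZ mcoeffMX_le lem_sub2rE //.
  by case: ifP => // le_vGa; rewrite subm_sub2r.
by rewrite big1 // => v _; rewrite lcm_labU1_le (negbTE le_Ga) andbF mulr0.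
Qed.

Lemma strand_inj c c' : (forall a, strand a c =1 strand a c') -> c =1 c'.
Proof.
move=> eq_strand F; apply/mpolyP => b; have := eq_strand (b + lcm_lab F)%MM F.
by rewrite /strand lem_addl addmK.
Qed.

Lemma strand0 a : strand a (fun=> 0) =1 (fun=> 0).
Proof. by move=> F; rewrite /strand mcoeff0 if_same. Qed.

Lemma lbdK c : lbd (lbd c) =1 (fun=> 0).
Proof.
apply: strand_inj => a G.
by rewrite strand_lbd (eq_chain_bd (strand_lbd a c)) chain_bdK strand0.
Qed.

End LabelledChains.

Section ConeExactness.
Variables (K : fieldType) (n : nat) (V : finType) (u : V -> 'X_{1..n}).
Variable D : pred {set V}.
Local Notation S := {mpoly K[n]}.
Local Notation lcm_lab := (lcm_lab u).
Implicit Types (v x : V) (F G : {set V}) (a : 'X_{1..n}) (c : {set V} -> S).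

Definition cone_vertex a x :=
  (u x <= a)%MM && [forall F, D F ==> (lcm_lab F <= a)%MM ==> D (x |: F)].

Definition chain_on k c := forall F, c F != 0 -> D F && (#|F| == k).

Hypothesis D_down : forall F G, D F -> G \subset F -> D G.
Hypothesis D_cone :
  forall a F, D F -> F != set0 -> (lcm_lab F <= a)%MM -> exists x, cone_vertex a x.

Lemma lbd_chain_on k c : chain_on k.+1 c -> chain_on k (lbd u c).
Proof.
move=> c_on G; apply: contraR => not_face; apply/eqP; apply: big1 => v vG.
suff -> : c (v |: G) = 0 by rewrite mul0r scaler0.
apply/eqP; apply: contraNT not_face => /c_on /andP [DvG].
by rewrite (D_down DvG (subsetUr _ _)) cardsU1 vG add1n eqSS.
Qed.

Definition chain_degs c : seq 'X_{1..n} :=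
  undup [seq (b + lcm_lab F)%MM | F <- enum [set: {set V}], b <- msupp (c F)].

Lemma strand_chain_degs a c F : strand u a c F != 0 -> a \in chain_degs c.
Proof.
rewrite /strand; case: ifPn => [le_Fa nz|]; last by rewrite eqxx.
rewrite mem_undup; apply/allpairsPdep; exists F, (a - lcm_lab F)%MM.
by rewrite mem_enum inE mcoeff_msupp submK.
Qed.

Definition chain_of_strands (A : seq 'X_{1..n}) (s : 'X_{1..n} -> {set V} -> K) F : S :=
  \sum_(a <- A) s a F *: 'X_[a - lcm_lab F].

Lemma strand_chain_of_strands A s a F : uniq A ->
    (forall b G, s b G != 0 -> (lcm_lab G <= b)%MM) ->
  strand u a (chain_of_strands A s) F = if a \in A then s a F else 0.
Proof.
move=> uniqA s_deg; rewrite /strand /chain_of_strands; case: ifPn => [le_Fa|not_le_Fa].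
  rewrite raddf_sum /= (eq_bigr (fun b => if b == a then s a F else 0)) => [|b _].
    rewrite -big_mkcond /=; case: ifPn => [aA|aNA]; last by rewrite big_hasC // has_pred1.
    by rewrite -big_filter filter_pred1_uniq // big_seq1.
  rewrite mcoeffZ mcoeffX; have [sb0|nz] := eqVneq (s b F) 0.
    by rewrite sb0 mul0r; case: (eqVneq b a) => // <-; rewrite sb0.
  have le_Fb := s_deg _ _ nz; have [->|neq_ba] := eqVneq b a; first by rewrite eqxx mulr1.
  suff /negbTE -> : (b - lcm_lab F != a - lcm_lab F)%MM by rewrite mulr0.
  by apply: contra neq_ba => /eqP eq_ba; rewrite -(submK le_Fb) -(submK le_Fa) eq_ba.
case: ifP => // _; apply/esym/eqP; apply: contraNT not_le_Fa; exact: s_deg.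
Qed.

Definition cone_lift a c : {set V} -> K :=
  if [pick x | cone_vertex a x] is Some x then cone_htpy x (strand u a c) else fun=> 0.

Lemma chain_of_strands_on k A s :
  (forall a F, s a F != 0 -> D F && (#|F| == k)) -> chain_on k (chain_of_strands A s).
Proof.
move=> s_on F; apply: contraR => not_face; apply/eqP.
rewrite /chain_of_strands big1 // => a _.
have [->|/s_on] := eqVneq (s a F) 0; first by rewrite scale0r.
by rewrite (negbTE not_face).
Qed.

Lemma cone_lift_on k a c F : chain_on k.+1 c -> cone_lift a c F != 0 ->
  [&& D F, #|F| == k.+2 & (lcm_lab F <= a)%MM].
Proof.
move=> c_on; rewrite /cone_lift; case: pickP => [x /andP [le_xa /forallP x_cone]|_].
  rewrite /cone_htpy; case: ifPn => [xF|]; last by rewrite eqxx.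
  rewrite /strand; case: ifPn => [le_Fxa nz|]; last by rewrite mulr0 eqxx.
  have /andP [DFx card_Fx] : D (F :\ x) && (#|F :\ x| == k.+1).
    by apply: c_on; apply: contraNneq nz => ->; rewrite mcoeff0 mulr0.
  have := x_cone (F :\ x); rewrite DFx le_Fxa setD1K //= => -> /=.
  rewrite (cardsD1 x F) xF (eqP card_Fx) add1n eqxx /=.
  by rewrite -(setD1K xF) lcm_labU1_le le_xa le_Fxa.
by rewrite eqxx.
Qed.

Lemma chain_bd_cone_lift k a c : chain_on k.+1 c -> lbd u c =1 (fun=> 0) ->
  chain_bd (cone_lift a c) =1 strand u a c.
Proof.
move=> c_on c_cycle G; rewrite /cone_lift; case: pickP => [x _|no_vertex].
  rewrite -[RHS](chain_bd_cone_htpy x) -[LHS]addr0; congr (_ + _).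
  rewrite /cone_htpy; case: ifP => // _.
  by rewrite -(strand_lbd u) (eq_strand u a c_cycle) strand0 mulr0.
suff strand_eq0 F : strand u a c F = 0 by rewrite strand_eq0 chain_bd0.
apply/eqP; apply: contraT; rewrite /strand; case: ifPn => [le_Fa nz|]; last by rewrite eqxx.
have /andP [DF card_F] : D F && (#|F| == k.+1).
  by apply: c_on; apply: contraNneq nz => ->; rewrite mcoeff0.
have [|x] := D_cone DF _ le_Fa; last by rewrite no_vertex.
by rewrite -card_gt0 (eqP card_F).
Qed.

Lemma lbd_exact k c : chain_on k.+1 c -> lbd u c =1 (fun=> 0) ->
  exists2 d, chain_on k.+2 d & c =1 lbd u d.
Proof.
move=> c_on c_cycle.
have lift_deg b G : cone_lift b c G != 0 -> (lcm_lab G <= b)%MM.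
  by case/(cone_lift_on c_on)/and3P.
exists (chain_of_strands (chain_degs c) (cone_lift^~ c)).
  by apply: chain_of_strands_on => b G /(cone_lift_on c_on) /and3P [-> -> _].
apply: (@strand_inj _ _ _ u) => a G; rewrite strand_lbd.
have strand_d F := strand_chain_of_strands a F (undup_uniq _) lift_deg.
have [a_deg|a_deg] := boolP (a \in chain_degs c).
  rewrite (eq_chain_bd (c' := cone_lift a c)) ?(chain_bd_cone_lift _ c_on c_cycle) //.
  by move=> F; rewrite strand_d a_deg.
rewrite (eq_chain_bd (c' := fun=> 0)) => [|F]; last by rewrite strand_d (negbTE a_deg).
rewrite chain_bd0; apply/eqP; apply: contraNT a_deg; exact: strand_chain_degs.
Qed.

End ConeExactness.

Section MatrixComplex.
Variables (K : fieldType) (n : nat) (V : finType) (u : V -> 'X_{1..n}).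
Variable D : pred {set V}.
Hypothesis D_down : forall F G : {set V}, D F -> G \subset F -> D G.
Hypothesis D_cone : forall a F,
  D F -> F != set0 -> (lcm_lab u F <= a)%MM -> exists x, cone_vertex u D a x.
Local Notation S := {mpoly K[n]}.
Local Notation lcm_lab := (lcm_lab u).
Local Notation chain_on := (chain_on D).
Implicit Types (F G : {set V}) (c : {set V} -> S).

(* Faces with [i.+1] vertices sit in homological degree [i]. *)
Definition faces i := [set F | D F && (#|F| == i.+1)].
Definition nfaces i := #|faces i|.
Definition face_of i (r : 'I_(nfaces i)) : {set V} := enum_val r.

Definition chain_of_row i (v : 'rV[S]_(nfaces i)) F : S := \sum_(r | face_of r == F) v 0 r.
Definition row_of_chain i c : 'rV[S]_(nfaces i) := \row_r c (face_of r).

Definition lbd_coef F G : S :=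
  \sum_(w | (w \notin G) && (w |: G == F)) ins_sign K w G *: 'X_[lcm_lab F - lcm_lab G].
Definition lbd_mx i : 'M[S]_(nfaces i.+1, nfaces i) :=
  \matrix_(r, s) lbd_coef (face_of r) (face_of s).
Definition aug_mx : 'cV[S]_(nfaces 0) := \col_r lbd_coef (face_of r) set0.

Lemma nfaces_eq0 i : (forall F, D F -> #|F| <= i)%N -> nfaces i = 0.
Proof.
move=> small; apply/eqP; rewrite cards_eq0; apply/eqP/setP => F; rewrite !inE.
by apply/negbTE; apply/andP => -[/small le_Fi /eqP card_F]; rewrite card_F ltnn in le_Fi.
Qed.

Lemma chain_of_row_on i (v : 'rV[S]_(nfaces i)) : chain_on i.+1 (chain_of_row v).
Proof.
move=> F nz; have [r /eqP r_F|no_r] := pickP (fun r : 'I_(nfaces i) => face_of r == F).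
  by have := enum_valP r; rewrite -/(face_of r) r_F inE.
by rewrite /chain_of_row big_pred0 ?eqxx in nz.
Qed.

Lemma row_of_chainK i : cancel (@chain_of_row i) (@row_of_chain i).
Proof.
move=> v; apply/rowP => s; rewrite mxE /chain_of_row (big_pred1 s) ?ord1 // => r.
by apply/eqP/eqP => [/enum_val_inj|->].
Qed.

Lemma chain_of_rowK i c : chain_on i.+1 c -> chain_of_row (row_of_chain i c) =1 c.
Proof.
move=> c_on F; rewrite /chain_of_row; case: (boolP (F \in faces i)) => F_face.
  rewrite (big_pred1 (enum_rank_in F_face F)) => [|r].
    by rewrite mxE /face_of enum_rankK_in.
  apply/eqP/eqP => [r_F|->]; last by rewrite /face_of enum_rankK_in.
  by apply: enum_val_inj; rewrite enum_rankK_in.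
rewrite big_pred0 => [|r]; last by apply: contraNF F_face => /eqP <-; apply: enum_valP.
by apply/esym/eqP; apply: contraR F_face => /c_on; rewrite inE.
Qed.

Lemma eq_row_of_chain i c c' : c =1 c' -> row_of_chain i c = row_of_chain i c'.
Proof. by move=> eq_c; apply/rowP => s; rewrite !mxE eq_c. Qed.

Lemma chain_of_row0 i : chain_of_row (0 : 'rV[S]_(nfaces i)) =1 (fun=> 0).
Proof. by move=> F; rewrite /chain_of_row big1 // => r _; rewrite mxE. Qed.

Lemma mul_lbd_coef i (v : 'rV[S]_(nfaces i)) G :
  \sum_r v 0 r * lbd_coef (face_of r) G = lbd u (chain_of_row v) G.
Proof.
rewrite /lbd_coef /lbd /chain_of_row; under eq_bigr => r _ do rewrite mulr_sumr.
rewrite (exchange_big_dep (fun w => w \notin G)) /= => [|r w _ /andP []//].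
apply: eq_bigr => w wG; rewrite mulr_suml scaler_sumr.
apply: eq_big => [r|r /andP [_ /eqP <-]]; first by rewrite wG eq_sym.
by rewrite scalerAr.
Qed.

Lemma mul_lbd_mx i (v : 'rV[S]_(nfaces i.+1)) :
  v *m lbd_mx i = row_of_chain i (lbd u (chain_of_row v)).
Proof.
by apply/rowP => s; rewrite !mxE -mul_lbd_coef; apply: eq_bigr => r _; rewrite mxE.
Qed.

Lemma mul_aug_mx (v : 'rV[S]_(nfaces 0)) : (v *m aug_mx) 0 0 = lbd u (chain_of_row v) set0.
Proof. by rewrite !mxE -mul_lbd_coef; apply: eq_bigr => r _; rewrite mxE. Qed.

Lemma chain_of_row_mul i (v : 'rV[S]_(nfaces i.+1)) :
  chain_of_row (v *m lbd_mx i) =1 lbd u (chain_of_row v).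
Proof. by rewrite mul_lbd_mx; apply/chain_of_rowK/lbd_chain_on/chain_of_row_on. Qed.

Lemma row_eq0P i (v : 'rV[S]_(nfaces i)) : v = 0 <-> chain_of_row v =1 (fun=> 0).
Proof.
split=> [->|v0]; first exact: chain_of_row0.
by rewrite -[v]row_of_chainK (eq_row_of_chain _ v0); apply/rowP => s; rewrite !mxE.
Qed.

Lemma lbd_cycleP i (v : 'rV[S]_(nfaces i)) :
  lbd u (chain_of_row v) =1 (fun=> 0) <-> exists w, v = w *m lbd_mx i.
Proof.
split=> [v_cycle|[w ->] G]; last first.
  by rewrite (eq_lbd u (chain_of_row_mul w)) lbdK.
have [d d_on v_bd] := lbd_exact D_cone (chain_of_row_on (v := v)) v_cycle.
exists (row_of_chain i.+1 d); rewrite mul_lbd_mx -[LHS]row_of_chainK.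
apply: eq_row_of_chain => F; rewrite v_bd.
by apply: eq_lbd => G; rewrite (chain_of_rowK d_on).
Qed.

Lemma mul_lbd_mx_eq0 i (v : 'rV[S]_(nfaces i.+1)) :
  v *m lbd_mx i = 0 <-> lbd u (chain_of_row v) =1 (fun=> 0).
Proof.
rewrite row_eq0P; split=> v_cycle G; first by rewrite -chain_of_row_mul.
by rewrite chain_of_row_mul.
Qed.

Lemma mul_aug_mx_eq0 (v : 'rV[S]_(nfaces 0)) :
  v *m aug_mx = 0 <-> lbd u (chain_of_row v) =1 (fun=> 0).
Proof.
split=> [v_cycle G|v_cycle]; last first.
  by apply/matrixP => r s; rewrite !ord1 mul_aug_mx v_cycle mxE.
have [->|/negbTE G_ne0] := eqVneq G set0; first by rewrite -mul_aug_mx v_cycle mxE.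
apply/eqP; apply: contraFT G_ne0 => /(lbd_chain_on D_down (chain_of_row_on (v := v))).
by rewrite cards_eq0 => /andP [].
Qed.

Definition vertex_ideal (f : S) :=
  exists2 c, chain_on 1 c & f = \sum_v c [set v] * 'X_[u v].

Theorem lbd_mx_resolution L : (forall F, D F -> #|F| <= L.+1)%N ->
  free_resolution vertex_ideal L.
Proof.
move=> small_faces; exists nfaces, aug_mx, lbd_mx; split; [|split; [|split]].
- move=> i lt_Li; apply: nfaces_eq0 => F /small_faces /leq_trans; apply; exact: lt_Li.
- move=> f; split=> [[c c_on ->]|[v ->]].
    exists (row_of_chain 0 c); rewrite mul_aug_mx lbd_set0.
    by apply: eq_bigr => w _; rewrite (chain_of_rowK c_on).
  by exists (chain_of_row v); [apply: chain_of_row_on | rewrite mul_aug_mx lbd_set0].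
- by move=> v; rewrite mul_aug_mx_eq0; apply: lbd_cycleP.
- by move=> i v; rewrite mul_lbd_mx_eq0; apply: lbd_cycleP.
Qed.

End MatrixComplex.

Section IdealSquare.
Variables (K : fieldType) (n q : nat) (g : 'I_q -> {mpoly K[n]}).
Local Notation S := {mpoly K[n]}.

Lemma ideal_gen_mul c i : ideal_gen g (c * g i).
Proof.
exists (fun j => if j == i then c else 0).
by rewrite (bigD1 i) //= eqxx big1 ?addr0 // => j /negbTE ->; rewrite mul0r.
Qed.

Lemma ideal_sq_genP f : ideal_sq (ideal_gen g) f <->
  exists c : 'I_q * 'I_q -> S, f = \sum_p c p * (g p.1 * g p.2).
Proof.
split=> [[k [a [b [ab_gen ->]]]]|[c ->]].
  have [ca a_E] := fin_all_exists (fun r => proj1 (ab_gen r)).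
  have [cb b_E] := fin_all_exists (fun r => proj2 (ab_gen r)).
  exists (fun p => \sum_r ca r p.1 * cb r p.2).
  under [RHS]eq_bigr => p _ do rewrite mulr_suml.
  rewrite exchange_big; apply: eq_bigr => r _; rewrite a_E b_E mulr_suml.
  rewrite -(pair_bigA _ (fun i j => ca r i * cb r j * (g i * g j))).
  by apply: eq_bigr => i _; rewrite mulr_sumr; apply: eq_bigr => j _ /=; ring.
exists #|{: 'I_q * 'I_q}|, (fun r => c (enum_val r) * g (enum_val r).1),
  (fun r => 1 * g (enum_val r).2); split.
  by move=> r; split; apply: ideal_gen_mul.
rewrite (eq_bigl (mem {: 'I_q * 'I_q})) // big_enum_val /=.
by apply: eq_bigr => p _; rewrite mul1r mulrA.
Qed.

End IdealSquare.

Lemma free_resolution_ext (K : fieldType) (n : nat) (J J' : {mpoly K[n]} -> Prop) L :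
  (forall f, J f <-> J' f) -> free_resolution J L -> free_resolution J' L.
Proof.
move=> eqJ [b [e [d [b_eq0 [J_im exactness]]]]]; exists b, e, d; split=> //; split=> // f.
by rewrite -eqJ.
Qed.

Lemma card_offdiag q : #|[set p : 'I_q * 'I_q | (p.1 < p.2)%N]| = 'C(q, 2).
Proof.
rewrite -sum1_card (eq_bigl (fun p : 'I_q * 'I_q => p.1 < p.2)%N) => [|p].
  rewrite -(pair_big_dep xpredT (fun i j : 'I_q => i < j)%N (fun _ _ => 1%N)) /=.
  rewrite (exchange_big_dep xpredT) //=.
  transitivity (\sum_(j < q) (j : nat))%N.
    apply: eq_bigr => j _.
    by rewrite (big_ord_narrow (ltnW (ltn_ord j))) sum1_card card_ord.
  by rewrite -(big_mkord xpredT (fun j => j)) bin2_sum.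
by rewrite inE.
Qed.

Section Mq2.
Variable q : nat.
Implicit Types (i j : 'I_q) (p : 'I_q * 'I_q) (F G : {set 'I_q * 'I_q}).

Lemma Mq2_facetE i : Mq2_facet i = (i, i) |: [set p : 'I_q * 'I_q | (p.1 < p.2)%N].
Proof. by apply/setP => p; rewrite !inE orbC. Qed.

Lemma card_Mq2_facet i : #|Mq2_facet i| = 'C(q, 2).+1.
Proof. by rewrite Mq2_facetE cardsU1 inE ltnn card_offdiag. Qed.

Lemma Mq2_face_subset F G : Mq2_face F -> G \subset F -> Mq2_face G.
Proof.
by move=> /existsP [i F_i] sGF; apply/existsP; exists i; apply: subset_trans F_i.
Qed.

Lemma Mq2_faceU1_offdiag p F : (p.1 < p.2)%N -> Mq2_face F -> Mq2_face (p |: F).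
Proof.
move=> lt_p /existsP [i F_i]; apply/existsP; exists i.
by rewrite subUset sub1set F_i Mq2_facetE setU1r ?inE.
Qed.

Lemma Mq2_face_card F : Mq2_face F -> (#|F| <= (Mq2_dim q).+1)%N.
Proof.
by move=> F_face; rewrite /Mq2_dim (leq_trans _ (leqSpred _)) // (leq_bigmax_cond _ F_face).
Qed.

Definition pair_sort p := if (p.1 <= p.2)%N then p else (p.2, p.1).

Lemma Mq2_face_pair_sort p : Mq2_face [set pair_sort p].
Proof.
apply/existsP; exists p.1; rewrite sub1set inE /pair_sort.
by case: p => i j /=; case: (ltngtP i j) => [lt|lt|/val_inj ->]; rewrite /= ?lt ?eqxx ?orbT.
Qed.

Lemma Mq2_dimE : Mq2_dim q = 'C(q, 2).
Proof.
rewrite /Mq2_dim; have [q0|q_gt0] := posnP q.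
  rewrite big_pred0 => [|F]; first by rewrite q0.
  by apply/existsP => -[i]; have := ltn_ord i; rewrite {2}q0.
suff -> : (\max_(F : {set 'I_q * 'I_q} | Mq2_face F) #|F|)%N = 'C(q, 2).+1 by [].
apply/anti_leq/andP; split.
  apply/bigmax_leqP => F /existsP [i F_i]; rewrite -(card_Mq2_facet i).
  exact: subset_leq_card.
rewrite -(card_Mq2_facet (Ordinal q_gt0)); apply: leq_bigmax_cond.
by apply/existsP; exists (Ordinal q_gt0).
Qed.

End Mq2.

Section Mq2Labels.
Variables (K : fieldType) (n q : nat) (m : 'I_q -> 'X_{1..n}).
Local Notation S := {mpoly K[n]}.
Implicit Types (i j : 'I_q) (p x w : 'I_q * 'I_q) (F G : {set 'I_q * 'I_q}) (a : 'X_{1..n}).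

Definition sq_lab p : 'X_{1..n} := (m p.1 + m p.2)%MM.
Local Notation lcm_lab := (lcm_lab sq_lab).
Local Notation no_offdiag_below a := (forall p, (p.1 < p.2)%N -> ~~ (sq_lab p <= a)%MM).

Lemma diag_sq_lab_uniq a i j : no_offdiag_below a ->
  (sq_lab (i, i) <= a)%MM -> (sq_lab (j, j) <= a)%MM -> i = j.
Proof.
move=> no_offdiag /mnm_lepP le_ia /mnm_lepP le_ja.
case: (ltngtP i j) => [lt_ij|lt_ji|/val_inj //];
  [case/negP: (no_offdiag (i, j) lt_ij) | case/negP: (no_offdiag (j, i) lt_ji)];
  apply/mnm_lepP => k; have := le_ia k; have := le_ja k; rewrite /sq_lab !mnmDE /=; lia.
Qed.

Lemma Mq2_face_low_diag a G x : no_offdiag_below a ->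
    Mq2_face G -> (lcm_lab G <= a)%MM -> x \in G ->
  exists2 i, x = (i, i) & (sq_lab (i, i) <= a)%MM.
Proof.
move=> no_offdiag /existsP [i G_i] le_Ga xG.
have le_xa : (sq_lab x <= a)%MM := lepm_trans (lcm_lab_ge sq_lab xG) le_Ga.
have := subsetP G_i x xG; rewrite inE => /orP [lt_x|/eqP x_ii].
  by have := no_offdiag x lt_x; rewrite le_xa.
by exists i; rewrite -?x_ii.
Qed.

Lemma Mq2_cone a F : Mq2_face F -> F != set0 -> (lcm_lab F <= a)%MM ->
  exists x, cone_vertex sq_lab (@Mq2_face q) a x.
Proof.
move=> F_face F_ne0 le_Fa.
have [p /andP [lt_p le_pa]|no_offdiag] :=
  pickP (fun p => (p.1 < p.2)%N && (sq_lab p <= a)%MM).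
  exists p; rewrite /cone_vertex le_pa; apply/forallP => G.
  by apply/implyP => G_face; apply/implyP => _; apply: Mq2_faceU1_offdiag.
have {}no_offdiag : no_offdiag_below a.
  by move=> p lt_p; apply: contraFN (no_offdiag p) => ->; rewrite lt_p.
have [w wF] := set0Pn _ F_ne0.
have [i w_ii le_ia] := Mq2_face_low_diag no_offdiag F_face le_Fa wF.
exists w; rewrite /cone_vertex w_ii le_ia; apply/forallP => G; apply/implyP => G_face.
apply/implyP => le_Ga; apply/existsP; exists i; apply/subsetP => x.
rewrite !inE => /orP [/eqP ->|xG]; first by rewrite eqxx orbT.
have [j -> le_ja] := Mq2_face_low_diag no_offdiag G_face le_Ga xG.
by rewrite (diag_sq_lab_uniq no_offdiag le_ja le_ia) eqxx orbT.
Qed.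

Lemma sq_lab_pair_sort p : sq_lab (pair_sort p) = sq_lab p.
Proof. by rewrite /pair_sort; case: ifP => //= _; rewrite /sq_lab addmC. Qed.

Lemma ideal_sq_Mq2P f :
  ideal_sq (ideal_gen (fun i => 'X_[m i] : S)) f <-> vertex_ideal sq_lab (@Mq2_face q) f.
Proof.
rewrite ideal_sq_genP; split=> [[c ->]|[c _ ->]].
  exists (fun F => \sum_(p | [set pair_sort p] == F) c p) => [F|].
    have [p /eqP <- _|no_p] := pickP (fun p => [set pair_sort p] == F).
      by rewrite Mq2_face_pair_sort cards1.
    by rewrite big_pred0 ?eqxx.
  rewrite (partition_big (@pair_sort q) predT) //=; apply: eq_bigr => w _.
  rewrite mulr_suml; apply: eq_big => [p|p /eqP <-]; first by rewrite (inj_eq set1_inj).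
  by rewrite sq_lab_pair_sort /sq_lab mpolyXD.
by exists (fun p => c [set p]); apply: eq_bigr => p _; rewrite /sq_lab mpolyXD.
Qed.

End Mq2Labels.

Theorem corollary3p8 (K : fieldType) (n q : nat) (m : 'I_q -> 'X_{1..n}) :
  minimal_monomial_gens m ->
  pd_le (ideal_sq (ideal_gen (fun i => 'X_[m i] : {mpoly K[n]}))) (Mq2_dim q) /\
  Mq2_dim q = 'C(q, 2).
Proof.
move=> _; split; last exact: Mq2_dimE.
exists (Mq2_dim q); split=> //.
apply: (free_resolution_ext (fun f => iff_sym (ideal_sq_Mq2P m f))).
apply: lbd_mx_resolution; [exact: Mq2_face_subset | exact: Mq2_cone | exact: Mq2_face_card].
Qed.
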